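(* Let $n$ be even. The expected runtime of the SD-(1+1) EA with parameter $R$, where $n+1\le R\le n^{O(1)}$, on $\mathrm{Trap}$ is $O(2.34^n\ln n)$.
   Context: $\mathrm{Trap}\colon\{0,1\}^n\to\mathbb{R}$ is defined by $\mathrm{Trap}(x)=\sum_{i=1}^n x_i$ for $x\neq 0^n$ and $\mathrm{Trap}(0^n)=n+1$. The SD-(1+1) EA with parameter $R\ge1$ maximizing $f\colon\{0,1\}^n\to\mathbb{R}$ ($n$ even) works as follows: choose $x$ uniformly at random from $\{0,1\}^n$, set strength $r\gets 1$ and counter $u\gets0$. In each iteration: create $y$ from $x$ by flipping each bit independently with probability $r/n$; set $u\gets u+1$. If $f(y)>f(x)$, set $x\gets y$, $r\gets1$, $u\gets0$. Otherwise, if $f(y)=f(x)$ and $r=1$, set $x\gets y$; and (in the case $f(y)\le f(x)$) if $u>2(en/r)^r\ln(nR)$, set $r\gets\min\{r+1,n/2\}$ and $u\gets 0$. The runtime is the number of iterations until a global maximum is first created. *)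

From HB Require Import structures.
From mathcomp Require Import all_boot all_order all_algebra.
From mathcomp Require Import all_classical all_reals.
From mathcomp Require Import ereal sequences exp.
Set Implicit Arguments. Unset Strict Implicit. Unset Printing Implicit Defensive.
Import Order.TTheory GRing.Theory Num.Theory.
Local Open Scope ring_scope.

Definition bits (n : nat) := {ffun 'I_n -> bool}.

Definition Trap (n : nat) (x : bits n) : nat :=
  if x == [ffun => false] then n.+1 else (\sum_(i < n) x i)%N.

Section SDEA.
Variable R : realType.
Variable n : nat.
Variable f : bits n -> R.
Variable Rpar : R.

Definition isGlobalMax (x : bits n) : bool := [forall y, f y <= f x].

(* state = (current search point x, strength r, counter u) *)
Definition state := (bits n * nat * nat)%type.

Definition hamming (x y : bits n) : nat := #|[set i | x i != y i]|.

Definition mutProb (r : nat) (x y : bits n) : R :=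
  (r%:R / n%:R) ^+ hamming x y * (1 - r%:R / n%:R) ^+ (n - hamming x y).

Definition threshold (r : nat) : R :=
  2 * (expR 1 * n%:R / r%:R) ^+ r * ln (n%:R * Rpar).

Definition update (s : state) (y : bits n) : state :=
  let: (x, r, u) := s in
  if f x < f y then (y, 1%N, 0%N)
  else
    let x' := if (f y == f x) && (r == 1%N) then y else x in
    let u' := u.+1 in
    if threshold r < u'%:R then (x', minn r.+1 (n./2), 0%N)
    else (x', r, u').

(* One iteration as a finitely supported distribution (list of weighted
   successor states).  The process is stopped (absorbing) as soon as the
   current search point is a global maximum, i.e. once a global maximum
   has been created. *)
Definition step (s : state) : seq (R * state) :=
  if isGlobalMax s.1.1 then [:: (1, s)]
  else [seq (mutProb s.1.2 s.1.1 y, update s y) | y <- enum {: bits n}].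

Fixpoint dist (t : nat) : seq (R * state) :=
  match t with
  | 0 => [seq ((2 ^+ n)^-1, (x, 1%N, 0%N)) | x <- enum {: bits n}]
  | t'.+1 =>
      flatten [seq [seq (ps.1 * qs.1, qs.2) | qs <- step ps.2] | ps <- dist t']
  end.

(* Pr[T > t]: no global maximum created within the first t iterations *)
Definition tailProb (t : nat) : R :=
  \sum_(ps <- dist t | ~~ isGlobalMax ps.2.1.1) ps.1.

(* E[T] = sum_{t >= 0} Pr[T > t], in the extended reals (+oo if divergent) *)
Definition expectedRuntime : \bar R :=
  (\sum_(t <oo) (tailProb t)%:E)%E.

End SDEA.

From HB Require Import structures.
From mathcomp Require Import all_boot all_order all_algebra.
From mathcomp Require Import all_classical all_reals.
From mathcomp Require Import ereal sequences exp.
From mathcomp Require Import topology normedtype.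
From mathcomp Require Import lra ring zify.
Set Implicit Arguments. Unset Strict Implicit. Unset Printing Implicit Defensive.
Import Order.TTheory GRing.Theory Num.Theory.
Local Open Scope ring_scope.

(* The runtime of the SD-(1+1) EA on Trap is bounded by a potential (drift)
   argument; the file follows its four steps.
   1. DriftTheorem: if a potential Phi >= 0 on an invariant set of states
      drops by at least 1 in expectation in every iteration started at a
      non-optimal state, then E[T] = sum_t Pr[T > t] <= E[Phi(s_0)].
   2. TrapPotential: for n = 2h the potential is A (n+1-Trap x) + B(r,u).
      The fitness part pays A for every improvement, and B counts the
      iterations the strength schedule can still spend below r = h (each
      phase lasts at most M + 1 >= threshold(r) + 1 iterations) plus
      K = 2^n, the expected waiting time of the uniform search (Mutation)
      at r = h.  A non-optimal point can only be left for free by hitting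
      0^n, so the schedule part alone yields the drift.
   3. ExponentialBounds: (a/r)^r is nondecreasing while e r <= a, so all
      thresholds below r = h are at most M = 2 (2e)^h ln(nR), whence
      E[T] <= (n+2)(2^n + h(M+1)) (trap_runtime_bound).
   4. Numerics: since 2e < 2.34^2, this is O(2.34^n ln n) whenever
      n+1 <= R <= n^c. *)

Section DriftTheorem.
Variables (R : realType) (n : nat) (f : bits n -> R) (Rpar : R).

Definition expect (g : state n -> R) (t : nat) : R :=
  \sum_(ps <- dist f Rpar t) ps.1 * g ps.2.

Lemma expect_succ (g : state n -> R) (t : nat) :
  expect g t.+1 =
  \sum_(ps <- dist f Rpar t) ps.1 * \sum_(qs <- step f Rpar ps.2) qs.1 * g qs.2.
Proof.
rewrite /expect /= big_flatten /= big_map; apply: eq_bigr => ps _.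
by rewrite big_map big_distrr /=; apply: eq_bigr => qs _; rewrite mulrA.
Qed.

Variable Inv : state n -> bool.
Hypothesis Inv_init : forall x, Inv (x, 1%N, 0%N).
Hypothesis Inv_step : forall s, Inv s ->
  forall qs, qs \in step f Rpar s -> 0 <= qs.1 /\ Inv qs.2.

Lemma dist_support t ps : ps \in dist f Rpar t -> 0 <= ps.1 /\ Inv ps.2.
Proof.
elim: t ps => [|t IH] ps /=.
  by case/mapP => x _ -> /=; rewrite invr_ge0 exprn_ge0.
case/flattenP => l /mapP [ps' Hps' ->] /mapP [qs Hqs ->] /=.
have [w1 i1] := IH _ Hps'; have [w2 i2] := Inv_step i1 Hqs.
by split => //; rewrite mulr_ge0.
Qed.

Lemma tailProb_ge0 t : 0 <= tailProb f Rpar t.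
Proof.
rewrite /tailProb big_seq_cond; apply: sumr_ge0 => ps /andP [Hps _].
by case: (dist_support Hps).
Qed.

Variable Phi : state n -> R.
Hypothesis Phi_ge0 : forall s, Inv s -> 0 <= Phi s.
Hypothesis Phi_drift : forall s, Inv s -> ~~ isGlobalMax f s.1.1 ->
  \sum_(qs <- step f Rpar s) qs.1 * Phi qs.2 + 1 <= Phi s.

Lemma expect_ge0 t : 0 <= expect Phi t.
Proof.
rewrite /expect big_seq; apply: sumr_ge0 => ps Hps.
by have [w i] := dist_support Hps; rewrite mulr_ge0 // Phi_ge0.
Qed.

Lemma expect_drift t : expect Phi t.+1 + tailProb f Rpar t <= expect Phi t.
Proof.
rewrite expect_succ /tailProb [X in _ + X]big_mkcond /= -big_split /= /expect.
rewrite big_seq_cond [X in _ <= X]big_seq_cond.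
apply: ler_sum => ps /andP [Hps _]; have [w i] := dist_support Hps.
case: ifP => Hopt.
  by rewrite -[X in _ + X]mulr1 -mulrDr ler_wpM2l // Phi_drift ?Hopt.
by rewrite /step (negbFE Hopt) big_cons big_nil /= mul1r !addr0.
Qed.

(* Telescoping expect_drift: the partial sums of Pr[T > t] are bounded. *)
Lemma tail_partial_sum_le T : \sum_(t < T) tailProb f Rpar t <= expect Phi 0.
Proof.
suff telescope : \sum_(t < T) tailProb f Rpar t + expect Phi T <= expect Phi 0.
  by apply: le_trans telescope; rewrite lerDl expect_ge0.
elim: T => [|T IH]; first by rewrite big_ord0 add0r.
apply: le_trans IH; rewrite big_ord_recr /= -addrA lerD2l addrC.
exact: expect_drift.
Qed.

Theorem drift_runtime_bound : (expectedRuntime f Rpar <= (expect Phi 0)%:E)%E.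
Proof.
rewrite /expectedRuntime; apply: lime_le.
  by apply: is_cvg_nneseries => k _ _; rewrite lee_fin tailProb_ge0.
apply: nearW => T; rewrite sumEFin lee_fin big_mkord.
exact: tail_partial_sum_le.
Qed.

End DriftTheorem.

Lemma half_le n : (n./2 <= n)%N.
Proof. by rewrite leq_half_double -addnn leqW // leq_addl. Qed.

Section Mutation.
Variables (R : realType) (n : nat).

Lemma mutProb_prod (r : nat) (x y : bits n) :
  mutProb R r x y =
  \prod_(i < n) (if x i != y i then r%:R / n%:R else 1 - r%:R / n%:R).
Proof.
rewrite (bigID (fun i => x i != y i)) /=.
rewrite (eq_bigr (fun _ => r%:R / n%:R : R)); last by move=> i ->.
rewrite [X in _ * X](eq_bigr (fun _ => 1 - r%:R / n%:R : R)); last first.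
  by move=> i /negbTE ->.
rewrite !prodr_const /mutProb /hamming cardsE; congr (_ * _ ^+ _).
have HC := cardC [pred i | x i != y i]; rewrite card_ord in HC.
by rewrite -[X in (X - _)%N]HC addKn; apply: eq_card => i.
Qed.

Lemma mutProb_sum1 (r : nat) (x : bits n) : \sum_(y : bits n) mutProb R r x y = 1.
Proof.
under eq_bigr do rewrite mutProb_prod.
rewrite -(bigA_distr_bigA
  (fun i b => if x i != b then r%:R / n%:R else 1 - r%:R / n%:R : R)).
by rewrite big1 // => i _; rewrite big_bool /=; case: (x i) => /=; ring.
Qed.

(* Hence the exponents in mutProb are n - d and d for d = hamming x y. *)
Lemma hamming_le (x y : bits n) : (hamming x y <= n)%N.
Proof. by rewrite /hamming -[X in (_ <= X)%N]card_ord max_card. Qed.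

Lemma mutProb_ge0 (r : nat) (x y : bits n) : (r <= n)%N -> 0 <= mutProb R r x y.
Proof.
move=> rn; rewrite /mutProb mulr_ge0 // exprn_ge0 ?divr_ge0 // subr_ge0.
case: n x y rn => [|m] x y rn; first by rewrite invr0 mulr0.
by rewrite ler_pdivrMr ?ltr0n // mul1r ler_nat.
Qed.

(* At the maximal strength n/2 every bit is flipped with probability 1/2,
   so the offspring is uniformly distributed. *)
Lemma mutProb_uniform (x y : bits n) : ~~ odd n -> (0 < n)%N ->
  mutProb R n./2 x y = (2 ^+ n)^-1.
Proof.
move=> ev n0.
have half_rate : (n./2)%:R / n%:R = 2^-1 :> R.
  rewrite -[in X in _ / X%:R](even_halfK ev) -muln2 natrM invfM mulrA.
  by rewrite divff ?mul1r // pnatr_eq0 -lt0n -double_gt0 even_halfK.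
rewrite /mutProb half_rate (_ : 1 - 2^-1 = 2^-1 :> R); last by field.
by rewrite -exprD subnKC ?hamming_le // exprVn.
Qed.

End Mutation.

Section ExponentialBounds.
Variable R : realType.

(* Adding one term to a partial sum of sum_i 1/i! costs less than the
   tail allowance 2/(k+5)!, which shrinks accordingly. *)
Lemma exp_partial_sum_bound k :
  \sum_(0 <= i < k.+4.+1) ((i`!)%:R : R)^-1 + 2 / (k.+4.+1)`!%:R <= 109 / 40.
Proof.
elim: k => [|k IH].
  by rewrite !big_nat_recr //= big_nil /= !factS fact0; lra.
rewrite big_nat_recr //=; apply: le_trans IH; rewrite -addrA lerD2l.
set F := (k.+4.+1)`!%:R : R.
have F0 : 0 < F^-1 by rewrite invr_gt0 ltr0n fact_gt0.
rewrite [X in 2 / X%:R]factS natrM -/F invfM mulrA.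
have ratio_le1 : 2 / (k.+4.+2)%:R <= 1 :> R.
  by rewrite ler_pdivrMr ?ltr0n // mul1r ler_nat.
move: F0 ratio_le1; set y := F^-1; set z := 2 / _ => y0 hz.
by rewrite -(mulr1 y) [X in _ <= X]mulrC; nra.
Qed.

Lemma expR1_le : expR (1 : R) <= 109 / 40.
Proof.
rewrite /expR; apply: limr_le; first exact: is_cvg_series_exp_coeff.
apply: nearW => k; rewrite /series /= /exp_coeff /=.
apply: (@le_trans _ _ (\sum_(0 <= i < k.+4.+1) ((i`!)%:R : R)^-1)).
  under eq_bigr do rewrite expr1n mul1r.
  rewrite [X in _ <= X](@big_cat_nat _ _ _ k) //= ?lerDl; last by lia.
  by apply: sumr_ge0 => i _; rewrite invr_ge0.
by apply: le_trans (exp_partial_sum_bound k); rewrite lerDl divr_ge0.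
Qed.

Lemma pow_ratio_step (a : R) (r : nat) : (0 < r)%N ->
  expR 1 * r.+1%:R <= a -> (a / r%:R) ^+ r <= (a / r.+1%:R) ^+ r.+1.
Proof.
move=> r0 ha.
have r0' : (r%:R : R) != 0 by rewrite pnatr_eq0 -lt0n.
have a0 : 0 <= a by apply: le_trans ha; rewrite mulr_ge0 ?expR_ge0.
have -> : a / r%:R = (a / r.+1%:R) * (r.+1%:R / r%:R) by rewrite mulrA divfK.
rewrite exprMn exprS [X in _ <= X]mulrC.
apply: ler_wpM2l; first by rewrite exprn_ge0 // divr_ge0.
apply: (@le_trans _ _ (expR (r%:R^-1) ^+ r)).
  have -> : r.+1%:R / r%:R = 1 + r%:R^-1 :> R.
    by rewrite -addn1 natrD mulrDl divff // mul1r addrC.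
  by apply: lerXn2r; rewrite ?nnegrE ?addr_ge0 ?invr_ge0 ?expR_ge0 ?expR_ge1Dx.
by rewrite -expRM_natl mulfV // ler_pdivlMr // ltr0n.
Qed.

Lemma pow_ratio_mono (a : R) (r s : nat) : (0 < r)%N -> (r <= s)%N ->
  expR 1 * s%:R <= a -> (a / r%:R) ^+ r <= (a / s%:R) ^+ s.
Proof.
move=> r0 /subnKC <-; elim: (s - r)%N => [|k IH] ha; first by rewrite addn0.
apply: le_trans (IH _) _.
  by apply: le_trans ha; rewrite ler_wpM2l ?expR_ge0 // ler_nat addnS.
by rewrite addnS; apply: pow_ratio_step; rewrite ?addn_gt0 ?r0 // -addnS.
Qed.

End ExponentialBounds.

Section TrapFacts.
Variable n : nat.

Definition zerob : bits n := [ffun => false].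

Lemma Trap_zero : Trap zerob = n.+1.
Proof. by rewrite /Trap eqxx. Qed.

Lemma Trap_le (x : bits n) : (Trap x <= n.+1)%N.
Proof.
rewrite /Trap; case: ifP => // _; apply: leq_trans (leqnSn n).
rewrite -[X in (_ <= X)%N]card_ord -sum1_card.
by apply: leq_sum => i _; case: (x i).
Qed.

(* A non-optimal point has fitness at most n, so 0^n improves on it. *)
Lemma Trap_nonopt (R : realType) (x : bits n) :
  ~~ isGlobalMax (fun x : bits n => (Trap x)%:R : R) x -> (Trap x <= n)%N.
Proof.
move=> H; have := Trap_le x; rewrite leq_eqVlt ltnS => /orP [/eqP E|//].
by case/forallPn: H => y; rewrite E ler_nat Trap_le.
Qed.

End TrapFacts.

Section TrapPotential.
Variables (R : realType) (n : nat) (Rpar : R).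

Local Notation trap := (fun x : bits n => (Trap x)%:R : R).
Local Notation h := n./2.

Definition nextSchedule (r u : nat) : nat * nat :=
  if threshold n Rpar r < u.+1%:R then (minn r.+1 h, 0%N) else (r, u.+1).

Variables (K M : R).
Hypotheses (K_ge0 : 0 <= K) (M_ge0 : 0 <= M).

(* Potential of the strength schedule: below the maximal strength h, the
   phases still to come last at most M + 1 iterations each, the current
   one has already used min(u, M) of them; at strength h it is K. *)
Definition schedulePot (r u : nat) : R :=
  if (r < h)%N then K + (h - r)%:R * (M + 1) - Num.min u%:R M else K.

(* A bounds the schedule potential, so the fitness part can pay for a
   reset of the schedule after every improvement. *)
Local Notation A := (K + h%:R * (M + 1)).

Definition trapPot (s : state n) : R :=
  A * (n.+1 - Trap s.1.1)%:R + schedulePot s.1.2 s.2.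

Lemma schedulePot_ge0 r u : 0 <= schedulePot r u.
Proof.
rewrite /schedulePot; case: ifP => // rh; rewrite -addrA addr_ge0 // subr_ge0.
apply: (@le_trans _ _ (M + 1)); first by rewrite ge_min lerDl ler01 orbT.
by rewrite -[X in X <= _]mul1r ler_wpM2r ?addr_ge0 // ler1n subn_gt0.
Qed.

Lemma schedulePot_le r u : schedulePot r u <= A.
Proof.
rewrite /schedulePot; case: ifP => rh; last first.
  by rewrite lerDl mulr_ge0 // addr_ge0.
rewrite -addrA lerD2l lerBlDr; apply: ler_wpDr; first by rewrite le_min ler0n.
by rewrite ler_wpM2r ?addr_ge0 // ler_nat leq_subr.
Qed.

Lemma potScale_ge0 : 0 <= A.
Proof. exact: le_trans (schedulePot_ge0 0 0) (schedulePot_le 0 0). Qed.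

Lemma trapPot_ge0 s : 0 <= trapPot s.
Proof. by rewrite addr_ge0 ?schedulePot_ge0 // mulr_ge0 // potScale_ge0. Qed.

Lemma schedulePot_decrease r u : (r < h)%N -> threshold n Rpar r <= M ->
  schedulePot (nextSchedule r u).1 (nextSchedule r u).2 + 1 <= schedulePot r u.
Proof.
move=> rh thM; have hm : Num.min u%:R M <= M by rewrite ge_min lexx orbT.
rewrite /nextSchedule.
case: (ltrP (threshold n Rpar r) u.+1%:R) => Ht /=; rewrite /schedulePot rh.
  rewrite (_ : minn r.+1 h = r.+1); last exact/minn_idPl.
  rewrite (@min_l _ _ 0%:R M) // subr0; case: ifP => rh2.
    rewrite -(subnSK rh) -[(h - r.+1).+1]addn1 natrD mulrDl mul1r; lra.
  by rewrite (_ : (h - r)%N = 1%N) ?mul1r; [lra | move/negbT: rh2; lia].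
have Hu : u.+1%:R <= M by apply: le_trans thM.
rewrite !min_l //; last by apply: le_trans Hu; rewrite ler_nat.
by rewrite -addn1 natrD; lra.
Qed.

(* The potential after one iteration: an improvement may reset the
   schedule, but is paid for by the fitness part; otherwise the fitness
   stays the same and the schedule advances. *)
Lemma trapPot_update (x : bits n) r u (y : bits n) :
  trapPot (update trap Rpar (x, r, u) y) <=
  A * (n.+1 - Trap x)%:R +
  (if (Trap x < Trap y)%N then 0
   else schedulePot (nextSchedule r u).1 (nextSchedule r u).2).
Proof.
have A0 := potScale_ge0.
rewrite /update ltr_nat; case: ifP => lt.
  rewrite /trapPot /= addr0.
  apply: (@le_trans _ _ (A * (n.+1 - Trap y)%:R + A)).
    by rewrite lerD2l schedulePot_le.
  rewrite -[X in _ + X]mulr1 -mulrDr ler_wpM2l // natr1 ler_nat.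
  by have := Trap_le y; lia.
set x' := (if _ then y else x).
have Tx : Trap x' = Trap x.
  rewrite /x'; case: ifP => // /andP [/eqP E _].
  by apply/eqP; rewrite -(eqr_nat R) E.
by rewrite /nextSchedule; case: ifP => Ht; rewrite /trapPot /= Tx.
Qed.

(* Averaging trapPot_update over the offspring: only the jump to 0^n is
   guaranteed to skip the schedule term. *)
Lemma expected_trapPot_le (x : bits n) r u : (r <= n)%N ->
  ~~ isGlobalMax trap x ->
  \sum_(y : bits n) mutProb R r x y * trapPot (update trap Rpar (x, r, u) y) <=
  A * (n.+1 - Trap x)%:R +
  schedulePot (nextSchedule r u).1 (nextSchedule r u).2 *
    (1 - mutProb R r x (zerob n)).
Proof.
move=> rn nopt; set B := schedulePot _ _.
have p_ge0 y : 0 <= mutProb R r x y by apply: mutProb_ge0.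
apply: (@le_trans _ _ (\sum_(y : bits n) mutProb R r x y *
    (A * (n.+1 - Trap x)%:R + (if (Trap x < Trap y)%N then 0 else B)))).
  by apply: ler_sum => y _; rewrite ler_wpM2l // trapPot_update.
under eq_bigr do rewrite mulrDr.
rewrite big_split /= -big_distrl /= mutProb_sum1 mul1r lerD2l.
have miss : 1 - mutProb R r x (zerob n) = \sum_(y | y != zerob n) mutProb R r x y.
  by rewrite -(mutProb_sum1 R r x) (bigD1 (zerob n)) //= addrC addrK.
rewrite (bigD1 (zerob n)) //= Trap_zero ltnS (Trap_nonopt nopt) mulr0 add0r.
rewrite miss mulr_sumr; apply: ler_sum => y _.
by rewrite mulrC ler_wpM2r //; case: ifP => // _; apply: schedulePot_ge0.
Qed.

Definition strengthInv (s : state n) : bool := (0 < s.1.2 <= h)%N.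

Lemma strengthInv_step (s : state n) : (0 < h)%N -> strengthInv s ->
  forall qs, qs \in step trap Rpar s -> 0 <= qs.1 /\ strengthInv qs.2.
Proof.
case: s => [[x r] u] h0 /andP [r0 rh] qs; rewrite /step /=.
case: ifP => _.
  by rewrite inE => /eqP -> /=; split => //; rewrite /strengthInv /= r0 rh.
case/mapP => y _ -> /=; split.
  by rewrite mutProb_ge0 // (leq_trans rh (half_le n)).
rewrite /update /strengthInv; case: ifP => _ /=; first by rewrite h0.
by case: ifP => _ /=; rewrite ?r0 ?rh // geq_minr andbT leq_min h0.
Qed.

Hypothesis n_even : ~~ odd n.
Hypothesis n_ge2 : (2 <= n)%N.
Hypothesis K_def : K = 2 ^+ n.
Hypothesis threshold_le : forall r, (0 < r)%N -> (r < h)%N -> threshold n Rpar r <= M.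

Lemma trapPot_drift (s : state n) : strengthInv s -> ~~ isGlobalMax trap s.1.1 ->
  \sum_(qs <- step trap Rpar s) qs.1 * trapPot qs.2 + 1 <= trapPot s.
Proof.
case: s => [[x r] u] /andP [r0 rh] /= nopt.
rewrite /step /= (negbTE nopt) big_map big_enum /=.
apply: le_trans (lerD (expected_trapPot_le u (leq_trans rh (half_le n)) nopt)
  (lexx 1)) _.
rewrite /trapPot /= -addrA lerD2l; set B := schedulePot _ _.
have B0 : 0 <= B by apply: schedulePot_ge0.
case: (ltnP r h) => [rlt|rge].
  apply: le_trans (schedulePot_decrease u rlt (threshold_le r0 rlt)); rewrite lerD2r.
  by rewrite ler_piMr // lerBlDr lerDl mutProb_ge0 // (leq_trans rh (half_le n)).
have req : r = h by apply/eqP; rewrite eqn_leq rh rge.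
have -> : B = K.
  rewrite /B /nextSchedule req (_ : minn h.+1 h = h); last exact/minn_idPr.
  by case: ifP => _; rewrite /schedulePot /= ltnn.
have n0 : (0 < n)%N by apply: leq_trans n_ge2.
have h2 : (2:R) ^+ n != 0 by rewrite expf_neq0 // pnatr_eq0.
by rewrite /schedulePot req ltnn mutProb_uniform // K_def mulrBr mulr1 divff // subrK.
Qed.

Lemma expect_trapPot_init : expect trap Rpar trapPot 0 <= (n.+2)%:R * A.
Proof.
have A0 := potScale_ge0.
rewrite /expect /= big_map.
apply: (@le_trans _ _ (\sum_(x <- enum {: bits n}) (2 ^+ n)^-1 * ((n.+2)%:R * A))).
  apply: ler_sum => x _; rewrite ler_wpM2l ?invr_ge0 ?exprn_ge0 //.
  have -> : (n.+2)%:R * A = A * n.+1%:R + A by rewrite -natr1 mulrDl mul1r mulrC.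
  apply: lerD; last exact: schedulePot_le.
  by rewrite ler_wpM2l // ler_nat leq_subr.
rewrite big_enum /= sumr_const card_ffun card_bool card_ord.
by rewrite -[_ *+ (2 ^ n)%N]mulr_natr natrX mulrAC mulVf ?mul1r // expf_neq0 // pnatr_eq0.
Qed.

End TrapPotential.

Lemma threshold_le_max (R : realType) (n : nat) (Rpar : R) (r : nat) :
  ~~ odd n -> 0 <= ln (n%:R * Rpar) -> (0 < r)%N -> (r < n./2)%N ->
  threshold n Rpar r <= 2 * (2 * expR 1) ^+ n./2 * ln (n%:R * Rpar).
Proof.
move=> ev ln0 r0 rh; rewrite /threshold ler_wpM2r // ler_wpM2l //.
have hn : n%:R = 2 * (n./2)%:R :> R by rewrite -{1}(even_halfK ev) -mul2n natrM.
have h0 : (n./2)%:R != 0 :> R by rewrite pnatr_eq0 -lt0n (leq_trans r0 (ltnW rh)).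
rewrite (_ : 2 * expR 1 = expR 1 * n%:R / (n./2)%:R); last first.
  by rewrite hn mulrA mulfK // mulrC.
apply: pow_ratio_mono => //; first exact: ltnW.
by rewrite ler_wpM2l ?expR_ge0 // ler_nat -{2}(even_halfK ev) -addnn leq_addr.
Qed.

Theorem trap_runtime_bound (R : realType) (n : nat) (Rpar : R) :
  ~~ odd n -> (2 <= n)%N -> 1 <= n%:R * Rpar ->
  (expectedRuntime (fun x : bits n => (Trap x)%:R : R) Rpar <=
   ((n.+2)%:R * (2 ^+ n + (n./2)%:R *
       (2 * (2 * expR 1) ^+ (n./2) * ln (n%:R * Rpar) + 1)))%:E)%E.
Proof.
move=> ev n2 nR1; set M := 2 * _ * _.
have ln0 : 0 <= ln (n%:R * Rpar) by apply: ln_ge0.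
have M0 : 0 <= M by rewrite mulr_ge0 // mulr_ge0 // exprn_ge0 // mulr_ge0 // expR_ge0.
have K0 : 0 <= (2 : R) ^+ n by rewrite exprn_ge0.
have h0 : (0 < n./2)%N by rewrite -double_gt0 even_halfK // (leq_trans _ n2).
have Inv_init (x : bits n) : strengthInv (x, 1%N, 0%N) by rewrite /strengthInv /= h0.
have drift := trapPot_drift K0 M0 ev n2 erefl
  (fun r r0 rh => threshold_le_max ev ln0 r0 rh).
apply: le_trans (drift_runtime_bound Inv_init
  (fun s => @strengthInv_step _ _ Rpar s h0) (fun s _ => trapPot_ge0 K0 M0 s) drift) _.
by rewrite lee_fin expect_trapPot_init.
Qed.

Section Numerics.
Variable R : realType.

(* A single term of the binomial expansion of (1 + d)^m. *)
Lemma binomial_le_pow (d : R) : 0 <= d ->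
  forall m k, d ^+ k * 'C(m, k)%:R <= (1 + d) ^+ m.
Proof.
move=> d0; elim=> [|m IH] k.
  by case: k => [|k]; rewrite ?bin0 ?bin0n ?mulr0 ?expr0 ?mulr1.
case: k => [|k]; first by rewrite bin0 expr0 mulr1 exprn_ege1 // lerDl.
rewrite binS natrD mulrDr [(1 + d) ^+ m.+1]exprS mulrDl mul1r.
by rewrite lerD // exprS -mulrA ler_wpM2l.
Qed.

(* 2 (h+1)^2 <= 75 C(h,3) for h >= 4, by comparing the cubic h(h-1)(h-2). *)
Lemma sq_le_binomial3 (h : nat) : (4 <= h)%N -> (2 * h.+1 ^ 2 <= 75 * 'C(h, 3))%N.
Proof.
move=> h4.
have E : ('C(h, 3) * 6 = h * (h - 1) * (h - 2))%N.
  have := bin_ffact h 3; rewrite !ffactnS ffactn0 muln1 => ->.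
  by rewrite -!subn1 -subnDA mulnA.
suff : (2 * h.+1 ^ 2 * 6 <= 75 * 'C(h, 3) * 6)%N by rewrite leq_pmul2r.
rewrite -[(75 * _ * 6)%N]mulnA E {E}.
by move: h4; case: h => [|[|[|[|k]]]] //= _; rewrite !subn1 /= !subSS subn0; nia.
Qed.

(* The polynomial factor (1+h)^2 is absorbed by the geometric factor
   (1 + 1/250)^h, the gap between (2e)^h and 2.34^(2h). *)
Lemma sq_le_geometric (h : nat) : (4 <= h)%N ->
  (1 + h%:R) ^+ 2 <= 75 / 2 * 250 ^+ 3 * (1 + 1 / 250) ^+ h :> R.
Proof.
move=> h4; set Cb : R := 'C(h, 3)%:R.
have sq_le : (1 + h%:R) ^+ 2 <= 75 / 2 * Cb.
  have := sq_le_binomial3 h4; rewrite -(ler_nat R).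
  have -> : ((2 * h.+1 ^ 2)%N%:R : R) = 2 * (1 + h%:R) ^+ 2 by ring.
  by rewrite natrM -/Cb; lra.
have Cb_le : Cb <= 250 ^+ 3 * (1 + 1/250) ^+ h.
  have := @binomial_le_pow (1/250) ltac:(lra) h 3; rewrite -/Cb => H.
  have -> : Cb = 250 ^+ 3 * ((1/250) ^+ 3 * Cb).
    by rewrite mulrA -exprMn mul1r divff // expr1n mul1r.
  by rewrite ler_wpM2l // exprn_ge0.
by apply: le_trans sq_le _; lra.
Qed.

(* The explicit runtime bound is O(2.34^n ln n) once ln(nR) <= (c+1) ln n
   and q = 2e <= 109/20 < 2.34^2 / (1 + 1/250). *)
Lemma explicit_bound_le (c n : nat) (L lnn q : R) :
  ~~ odd n -> (8 <= n)%N -> 1 <= lnn -> 0 <= L -> L <= (c.+1)%:R * lnn ->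
  4 <= q -> q <= 109/20 ->
  (n.+2)%:R * (2 ^+ n + (n./2)%:R * (2 * q ^+ n./2 * L + 1))
  <= 2 * (2 * c%:R + 3) * (75 / 2 * 250 ^+ 3) * (234 / 100) ^+ n * lnn.
Proof.
move=> ev n8 lnn1 L0 Lc q4 qub.
have [h En] : exists h, n = h.*2 by exists n./2; rewrite even_halfK.
subst n; rewrite doubleK.
have {n8} h4 : (4 <= h)%N by rewrite -leq_double.
set Q := q ^+ h; set P := Q * lnn; set hr := h%:R : R; set cr := c%:R : R.
have Q4 : 4 ^+ h <= Q by apply: lerXn2r => //; rewrite nnegrE; lra.
have Q1 : 1 <= Q by apply: le_trans _ Q4; rewrite exprn_ege1 // ler1n.
have P_ge : Q <= P by rewrite /P ler_peMr // (le_trans _ Q1).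
have hr0 : 0 <= hr by rewrite ler0n.
have cr0 : 0 <= cr by rewrite ler0n.
have inner : 4 ^+ h + hr * (2 * Q * L + 1) <= (1 + hr) * (2 * cr + 3) * P.
  have QL : Q * L <= cr * P + P.
    apply: le_trans (ler_wpM2l (le_trans ler01 Q1) Lc) _.
    by rewrite /P /cr -natr1; lra.
  have f1 : hr * (Q * L) <= hr * (cr * P + P) by rewrite ler_wpM2l.
  have f2 : hr <= hr * P by rewrite ler_peMr // (le_trans Q1 P_ge).
  have P0 : 0 <= P by apply: le_trans (le_trans ler01 Q1) P_ge.
  have f3 : 4 ^+ h <= P by apply: le_trans Q4 P_ge.
  have f4 : 0 <= cr * P by rewrite mulr_ge0.
  have f5 : 0 <= hr * (cr * P) by rewrite mulr_ge0.
  lra.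
have lnn0 : 0 <= lnn by lra.
have P0 : 0 <= P by rewrite mulr_ge0 // (le_trans ler01 Q1).
have k0 : 0 <= 2 * (2 * cr + 3) * (75 / 2 * 250 ^+ 3) by lra.
have sq_le := ler_wpM2l k0 (ler_wpM2r P0 (sq_le_geometric h4)).
have G_le : (1 + 1/250) ^+ h * Q <= ((234/100) ^+ 2) ^+ h.
  by rewrite /Q -exprMn lerXn2r ?nnegrE //; lra.
have G_le' := ler_wpM2l k0 (ler_wpM2r lnn0 G_le).
have hr2 : ((h.*2).+2)%:R = 2 * (1 + hr) :> R by rewrite -muln2 /hr; ring.
rewrite hr2 -mul2n !exprM (_ : 2 ^+ 2 = 4 :> R); last by ring.
apply: le_trans (ler_wpM2l (_ : 0 <= 2 * (1 + hr)) inner) _; first lra.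
move: sq_le G_le'; rewrite /P; lra.
Qed.

Lemma ln_param_bounds (c n : nat) (Rpar : R) : (8 <= n)%N ->
  n.+1%:R <= Rpar -> Rpar <= n%:R ^+ c ->
  [/\ 1 <= ln (n%:R : R), 1 <= n%:R * Rpar &
      ln (n%:R * Rpar) <= (c.+1)%:R * ln (n%:R : R)].
Proof.
move=> n8 hR1 hR2.
have n8r : 8 <= n%:R :> R by rewrite (ler_nat R 8 n).
have R1 : 1 <= Rpar by apply: le_trans hR1; rewrite ler1n.
have eub := expR1_le R.
split.
- rewrite -[X in X <= _](expRK 1) ler_ln ?posrE ?expR_gt0 //; lra.
- by rewrite mulr_ege1 //; lra.
- rewrite (_ : (c.+1)%:R * _ = ln (n%:R ^+ c.+1)); last first.
    by rewrite lnXn ?mulr_natl //; lra.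
  have nR0 : 0 < n%:R * Rpar by rewrite mulr_gt0 //; lra.
  rewrite ler_ln ?posrE ?exprn_gt0 //; last lra.
  by rewrite exprS ler_wpM2l //; lra.
Qed.

End Numerics.

Theorem mainTheorem7 (R : realType) (c : nat) :
  exists C : R, exists N : nat,
    forall (n : nat) (Rpar : R),
      (N <= n)%N -> ~~ odd n ->
      n.+1%:R <= Rpar -> Rpar <= n%:R ^+ c ->
      (expectedRuntime (fun x : bits n => (Trap x)%:R) Rpar
        <= (C * (234 / 100) ^+ n * ln (n%:R : R))%:E)%E.
Proof.
exists (2 * (2 * c%:R + 3) * (75 / 2 * 250 ^+ 3)), 8%N.
move=> n Rpar n8 ev hR1 hR2.
have [lnn1 nR1 lnc] := ln_param_bounds n8 hR1 hR2.
apply: le_trans (trap_runtime_bound ev (leq_trans _ n8) nR1) _ => //.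
have e2 : 2 <= expR (1 : R) by have := expR_ge1Dx (1 : R); lra.
have eub := expR1_le R.
by rewrite lee_fin explicit_bound_le ?ln_ge0 //; lra.
Qed.
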